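(* Let $\{A_{k,n}:0\le k\le n,\ n\in\mathbb N\}$ be a triangular array of complex random variables satisfying Assumptions 1* and 2*. Then almost surely: $\lim_{n\to\infty}|A_{n,n}|^{1/n}=1$; for each fixed $k\ge0$, $\lim_{n\to\infty}|A_{k,n}|^{1/n}=1$; and $\lim_{n\to\infty}\max_{0\le k\le n}|A_{k,n}|^{1/n}=1$.
   Context: $F_{k,n}(x)=\mathbb P(|A_{k,n}|\le x)$. Assumption 1*: there is $N\in\mathbb N$ such that for each $n\ge N$ the random variables $|A_{0,n}|,\dots,|A_{n,n}|$ are jointly independent; and there are $a>1$ and a function $f:[a,\infty)\to[0,1]$ such that $f(x)\log x$ is decreasing, $\int_a^\infty f(x)\frac{\log x}{x}\,dx<\infty$, and $1-F_{k,n}(x)\le f(x)$ for all $x\ge a$, all $0\le k\le n$, all $n\ge N$. Assumption 2*: there are $N\in\mathbb N$, $0<b<1$ and an increasing $g:[0,b]\to[0,1]$ with $\int_0^bg(x)\,dx/x<\infty$ and $F_{k,n}(x)\le g(x)$ for all $x\in[0,b]$, $0\le k\le n$, $n\ge N$. *)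

From HB Require Import structures.
From mathcomp Require Import all_boot all_order all_algebra.
From mathcomp Require Import all_classical all_reals all_analysis.
Set Implicit Arguments. Unset Strict Implicit. Unset Printing Implicit Defensive.
Import Order.TTheory GRing.Theory Num.Theory.
Import numFieldNormedType.Exports.
Local Open Scope classical_set_scope.
Local Open Scope ring_scope.

Definition cmod {R : realType} (x y : R) : R := Num.sqrt (x ^+ 2 + y ^+ 2).

Definition mutually_independent {R : realType} {d : measure_display}
  {T : measurableType d} (P : probability T R) (m : nat)
  (X : 'I_m -> T -> R) : Prop :=
  forall B : 'I_m -> set R, (forall i, measurable (B i)) ->
    P (\bigcap_(i in [set: 'I_m]) (X i @^-1` B i)) =
    (\prod_(i < m) P (X i @^-1` B i))%E.

From HB Require Import structures.
From mathcomp Require Import all_boot all_order all_algebra.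
From mathcomp Require Import all_classical all_reals all_analysis.
From mathcomp Require Import measurable_realfun ring lra.
Import Order.TTheory GRing.Theory Num.Theory.
Import numFieldNormedType.Exports.
Local Open Scope classical_set_scope.
Local Open Scope ring_scope.

(* Fix e > 0.  By the union bound and Assumption 1*,
   P(max_k |A_{k,n}| > e^{en}) <= (n+1) f(e^{en}).  Since f(x) ln x is
   nonincreasing, n f(e^{en}) is at most a constant times the integral of
   f(x) ln x / x over the shell [e^{e(n-1)}, e^{en}[; the shells are disjoint,
   so these probabilities are summable.  Symmetrically, Assumption 2* gives
   P(|A_{k,n}| <= e^{-en}) <= g(e^{-en}), at most a constant times the integral
   of g(x) / x over [e^{-en}, e^{-e(n-1)}[.  By Borel-Cantelli, almost surely
   e^{-en} < |A_{k,n}| and max_k |A_{k,n}| <= e^{en} for all large n, for every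
   e = 1/(m+1) simultaneously; this squeezes the n-th roots to 1. *)

Lemma nneseries_addn_ge (R : realType) (f : (\bar R)^nat) k :
  (forall i, (k <= i)%N -> (0 <= f i)%E) ->
  (\sum_(i <oo) f (i + k)%N = \sum_(k <= i <oo) f i)%E.
Proof.
move=> f0; pose g i := f (maxn i k).
have fg i : (k <= i)%N -> f i = g i by move=> ki; rewrite /g (maxn_idPl ki).
transitivity (\sum_(i <oo) g (i + k)%N)%E.
  by apply: eq_eseriesr => i _; apply: fg; rewrite leq_addl.
rewrite nneseries_addn; last by move=> i; apply: f0; rewrite leq_maxr.
rewrite eseries_cond [in RHS]eseries_cond.
by apply: eq_eseriesr => i /= ki; rewrite fg.
Qed.

Lemma eventually_addn (P : nat -> Prop) k :
  (\forall n \near \oo, P (n + k)%N) -> \forall n \near \oo, P n.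
Proof.
move=> [n0 _ Pn0]; exists (n0 + k)%N => // n /= n0kn.
have kn : (k <= n)%N by rewrite (leq_trans (leq_addl n0 k)).
rewrite -(subnK kn); apply: Pn0; rewrite /= leq_subRL //.
by rewrite addnC.
Qed.

Lemma exists_expR_mulr_natr_ge {R : realType} (c e : R) N :
  0 < e -> exists2 M, (N <= M)%N & c <= expR (e * M%:R).
Proof.
move=> e0; pose M := maxn N (Num.Def.archi_bound (`|c| / e)).
exists M; first exact: leq_maxl.
have cM : `|c| < e * M%:R.
  rewrite mulrC -ltr_pdivrMr //; apply: lt_le_trans (archi_boundP _) _.
    by rewrite divr_ge0 // ltW.
  by rewrite ler_nat leq_maxr.
have := expR_ge1Dx (e * M%:R); have := ler_norm c; lra.
Qed.

Lemma measurable_fun_cmod d (T : measurableType d) (R : realType) (X Y : T -> R) :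
  measurable_fun setT X -> measurable_fun setT Y ->
  measurable_fun setT (fun w => cmod (X w) (Y w)).
Proof.
move=> mX mY; apply: measurableT_comp.
  exact: continuous_measurable_fun (@sqrt_continuous R).
by apply: measurable_funD; exact: measurable_funX.
Qed.

Section measure_bounds.
Context {d} {T : measurableType d} {R : realType} (mu : {measure set T -> \bar R}).

Lemma measurable_le_cst (X : T -> R) x : measurable_fun setT X ->
  measurable [set w | X w <= x].
Proof.
move=> mX; have := measurable_fun_le measurableT mX (measurable_cst x).
by rewrite setTI.
Qed.

Lemma gt_cst_setC (X : T -> R) x : [set w | x < X w] = ~` [set w | X w <= x].
Proof. by apply/seteqP; split => w /=; rewrite ltNge => /negP. Qed.

Lemma measure_bigsetU_ord_le n (F : nat -> set T) (c : R) :
  (forall k, measurable (F k)) -> (forall k, (k < n)%N -> (mu (F k) <= c%:E)%E) ->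
  (mu (\big[setU/set0]_(k < n) F k) <= (n%:R * c)%:E)%E.
Proof.
move=> mF Fc.
apply: le_trans (@content_subadditive _ _ _ mu _ F n (fun k _ => mF k) _ _) _ => //.
  by apply: bigsetU_measurable => k _; exact: mF.
have -> : (n%:R * c)%:E = (\sum_(k < n) c%:E)%E.
  by rewrite sumEFin sumr_const card_ord mulr_natl.
by apply: lee_sum => k _; exact: Fc.
Qed.

Lemma ae_eventually_notin (F : (set T)^nat) (c : (\bar R)^nat) N :
  (forall n, measurable (F n)) -> (forall n, (N <= n)%N -> (mu (F n) <= c n)%E) ->
  (\sum_(N <= n <oo) c n < +oo)%E ->
  {ae mu, forall w, \forall n \near \oo, ~ F n w}.
Proof.
move=> mF Fc c_fin.
have sumF : (\sum_(n <oo) mu (F (n + N)%N) < +oo)%E.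
  rewrite (@nneseries_addn _ (fun n => mu (F n)) N) //; apply: le_lt_trans c_fin.
  rewrite (eseries_cond (fun n => mu (F n))) (eseries_cond c).
  by apply: lee_nneseries => n // /andP[_ /Fc].
exists (lim_sup_set (fun n => F (n + N)%N)); split.
- by apply: bigcapT_measurable => n; apply: bigcup_measurable => k _; exact: mF.
- exact: lim_sup_set_cvg0.
- move=> w /= notFw n _; apply: contrapT => nFw; apply: notFw.
  by apply: (@eventually_addn _ N); exists n => // k /= nk Fk; apply: nFw; exists k.
Qed.

Lemma nneseries_le_integral (D : set T) (h : T -> R) (F : (set T)^nat)
    (c : (\bar R)^nat) (K : R) :
  measurable D -> measurable_fun D (EFin \o h) -> (forall x, D x -> 0 <= h x) ->
  0 <= K -> (forall n, measurable (F n)) -> trivIset setT F ->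
  (forall n, F n `<=` D) -> (forall n, 0 <= c n)%E ->
  (forall n, c n <= K%:E * \int[mu]_(x in F n) (h x)%:E)%E ->
  (\sum_(n <oo) c n <= K%:E * \int[mu]_(x in D) (h x)%:E)%E.
Proof.
move=> mD mh h0 K0 mF tF FD c0 cF.
have UFD : \bigcup_n F n `<=` D by move=> x [n _ /FD].
have hF0 n : (0 <= \int[mu]_(x in F n) (h x)%:E)%E.
  by apply: integral_ge0 => x /FD/h0; rewrite lee_fin.
apply: (le_trans (lee_nneseries (fun n _ _ => c0 n) (fun n _ => cF n))).
rewrite nneseriesZl // -ge0_integral_bigcup //; last 2 first.
- exact: measurable_funS mh.
- by move=> x /UFD/h0; rewrite lee_fin.
apply: lee_wpmul2l; first by rewrite lee_fin.
by apply: ge0_subset_integral => //; exact: bigcupT_measurable.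
Qed.
End measure_bounds.

Lemma measurable_inv (R : realType) : measurable_fun setT (@GRing.inv R).
Proof.
rewrite -(setUv [set 0]).
apply/measurable_funU => //; first exact: measurableC.
split; first exact: measurable_fun_set1.
apply: open_continuous_measurable_fun.
- rewrite openC; apply: accessible_closed_set1.
  exact: hausdorff_accessible (@norm_hausdorff _ R^o).
- by move=> x; rewrite inE /= => /eqP x0; exact: inv_continuous.
Qed.

Lemma nonincreasing_itv_measurable (R : realType) (a : R) (phi : R -> R) :
  (forall x y, a <= x -> x <= y -> phi y <= phi x) ->
  measurable_fun `[a, +oo[%classic phi.
Proof.
move=> phi_ni.
have mpsi : measurable_fun `[a, +oo[%classic (fun x => phi (Num.max x a)).
  apply: nonincreasing_measurable => // x y xy; apply: phi_ni.
  - by rewrite le_max lexx orbT.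
  - by rewrite ge_max !le_max xy lexx !orbT.
apply: eq_measurable_fun mpsi => x; rewrite inE /= in_itv /= andbT => ax.
by rewrite max_l.
Qed.

Lemma nondecreasing_itv_measurable (R : realType) (a b : R) (phi : R -> R) :
  a <= b -> (forall x y, a <= x -> x <= y -> y <= b -> phi x <= phi y) ->
  measurable_fun `[a, b]%classic phi.
Proof.
move=> ab phi_nd.
have mpsi : measurable_fun `[a, b]%classic (fun x => phi (Num.min (Num.max x a) b)).
  apply: nondecreasing_measurable => // x y xy; apply: phi_nd.
  - by rewrite le_min le_max lexx orbT ab.
  - by rewrite le_min !ge_min lexx !orbT andbT ge_max !le_max xy lexx !orbT.
  - by rewrite ge_min lexx orbT.
apply: eq_measurable_fun mpsi => x; rewrite inE /= in_itv /= => /andP[ax xb].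
by rewrite max_l // min_l.
Qed.

Lemma measurable_fun_divx (R : realType) (D : set R) (phi : R -> R) :
  measurable D -> measurable_fun D phi -> measurable_fun D (fun x => phi x / x).
Proof.
move=> mD mphi; apply: measurable_funM => //.
exact: measurable_funS (measurable_inv R).
Qed.

Lemma le_dist_mulr_natr (R : realType) (e : R) i j : 0 <= e -> i != j ->
  e <= `|e * i%:R - e * j%:R|.
Proof.
move=> e0 ij; rewrite -mulrBr normrM (ger0_norm e0) ler_peMr //.
have dist_ge1 m n : (m < n)%N -> 1 <= `|n%:R - m%:R : R|.
  move=> mn; rewrite -natrB; last exact: ltnW.
  by rewrite normr_nat ler1n subn_gt0.
by case: ltngtP ij => // [ij|ji] _; [rewrite distrC|]; exact: dist_ge1.
Qed.

Section expR_shell.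
Context {R : realType}.
Implicit Types (t e v x : R).

Definition expR_shell t e : set R := `[expR (t - e), expR t[%classic.

Lemma measurable_expR_shell t e : measurable (expR_shell t e).
Proof. exact: measurable_itv. Qed.

Lemma ln_expR_shell t e x : expR_shell t e x -> t - e <= ln x < t.
Proof.
rewrite /expR_shell /= in_itv /= => /andP[lex ltx].
have x0 : 0 < x := lt_le_trans (expR_gt0 _) lex.
by rewrite -ler_expR -ltr_expR lnK ?posrE // lex ltx.
Qed.

Lemma trivIset_expR_shell e (t : nat -> R) :
  (forall i j, i != j -> e <= `|t i - t j|) ->
  trivIset setT (fun n => expR_shell (t n) e).
Proof.
move=> te i j _ _ [x [/ln_expR_shell/andP[ix xi] /ln_expR_shell/andP[jx xj]]].
apply: contrapT => /eqP/te; rewrite leNgt => /negP; apply.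
by rewrite ltr_distlC; apply/andP; split; lra.
Qed.

Lemma integral_expR_shell_ge (h : R -> R) t e v : 0 < e -> 0 <= v ->
  measurable_fun (expR_shell t e) (EFin \o h) ->
  (forall x, expR_shell t e x -> v <= h x) ->
  ((v * (expR t * (1 - expR (- e))))%:E <=
     \int[lebesgue_measure]_(x in expR_shell t e) (h x)%:E)%E.
Proof.
move=> e0 v0 mh vh.
have lt_ends : expR (t - e) < expR t by rewrite ltr_expR ltrBlDr ltrDl.
apply: (@le_trans _ _ (\int[lebesgue_measure]_(x in expR_shell t e) (cst v%:E) x)%E).
  rewrite /expR_shell integral_cst //= lebesgue_measure_itv /= lte_fin lt_ends /=.
  by rewrite -EFinD -EFinM lee_fin expRD mulrBr mulr1.
by apply: ge0_le_integral => //; exact: measurable_expR_shell.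
Qed.
End expR_shell.

Section tail_series.
Variables (R : realType) (f : R -> R) (a : R).
Hypothesis a_gt1 : 1 < a.
Hypothesis f_ge0 : forall x, a <= x -> 0 <= f x.
Hypothesis f_ln_noninc : forall x y, a <= x -> x <= y -> f y * ln y <= f x * ln x.

Lemma measurable_tail_integrand :
  measurable_fun `[a, +oo[%classic (EFin \o (fun x => f x * ln x / x)).
Proof.
apply/measurable_EFinP; apply: measurable_fun_divx => //.
exact: nonincreasing_itv_measurable f_ln_noninc.
Qed.

Lemma tail_integrand_ge0 x : `[a, +oo[%classic x -> 0 <= f x * ln x / x.
Proof.
rewrite /= in_itv /= andbT => ax.
have x1 : 1 <= x := le_trans (ltW a_gt1) ax.
by rewrite divr_ge0 ?mulr_ge0 ?f_ge0 ?ln_ge0 // (le_trans ler01 x1).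
Qed.

Lemma expR_shell_sub_tail t e :
  a <= expR (t - e) -> expR_shell t e `<=` `[a, +oo[%classic.
Proof.
move=> a_te x; rewrite /expR_shell /= !in_itv /= andbT => /andP[+ _].
exact: le_trans.
Qed.

Lemma tail_term_le_integral e t : 0 < e -> a <= expR (t - e) ->
  ((f (expR t) * t)%:E <= (1 - expR (- e))^-1%:E *
     \int[lebesgue_measure]_(x in expR_shell t e) (f x * ln x / x)%:E)%E.
Proof.
move=> e0 a_te.
have shell_a := expR_shell_sub_tail _ _ a_te.
have a_t : a <= expR t by apply: (le_trans a_te); rewrite ler_expR gerBl ltW.
have t0 : 0 < t by rewrite -expR_gt1 (lt_le_trans a_gt1).
have ft0 := f_ge0 _ a_t.
pose v := f (expR t) * t / expR t.
have v0 : 0 <= v.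
  by apply: divr_ge0; [apply: mulr_ge0 => //; exact: ltW | exact: ltW (expR_gt0 t)].
have v_le x : expR_shell t e x -> v <= f x * ln x / x.
  move=> xs; have /shell_a /= := xs; rewrite in_itv /= andbT => ax.
  have x0 : 0 < x := lt_le_trans (lt_trans ltr01 a_gt1) ax.
  have xt : x <= expR t by move: xs; rewrite /expR_shell /= in_itv /= => /andP[_ /ltW].
  have fx0 : 0 <= f x * ln x by rewrite mulr_ge0 ?f_ge0 ?ln_ge0 // (le_trans (ltW a_gt1)).
  apply: (@le_trans _ _ (f x * ln x / expR t)).
    by rewrite ler_wpM2r ?invr_ge0 ?(ltW (expR_gt0 t)) // -{2}(expRK t) f_ln_noninc.
  by rewrite ler_wpM2l // lef_pV2 ?posrE ?expR_gt0.
have shell_int := @integral_expR_shell_ge _ _ t e v e0 v0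
  (measurable_funS (measurable_itv _) shell_a measurable_tail_integrand) v_le.
have q1 : expR (- e) < 1 by rewrite expR_lt1 oppr_lt0.
have K0 : (0 <= (1 - expR (- e))^-1%:E)%E by rewrite lee_fin invr_ge0 subr_ge0 ltW.
apply: le_trans (lee_wpmul2l K0 shell_int); rewrite -EFinM lee_fin.
have -> : (1 - expR (- e))^-1 * (v * (expR t * (1 - expR (- e)))) = f (expR t) * t.
  by rewrite /v; field; rewrite gt_eqF ?expR_gt0 // subr_eq0 eq_sym lt_eqF.
by [].
Qed.

Lemma tail_series_finite e N : 0 < e -> a <= expR (e * N%:R) ->
  (\int[lebesgue_measure]_(x in `[a, +oo[%classic) (f x * ln x / x)%:E < +oo)%E ->
  (\sum_(N.+1 <= n <oo) (n.+1%:R * f (expR (e * n%:R)))%:E < +oo)%E.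
Proof.
move=> e0 a_N f_int.
have a_shell n : (N.+1 <= n)%N -> a <= expR (e * n%:R - e).
  move=> Nn; apply: le_trans a_N _; rewrite ler_expR.
  have : N%:R + 1 <= n%:R :> R by rewrite natr1 ler_nat.
  by nra.
have a_n n : (N.+1 <= n)%N -> a <= expR (e * n%:R).
  by move=> /a_shell /le_trans; apply; rewrite ler_expR gerBl ltW.
have q1 : expR (- e) < 1 by rewrite expR_lt1 oppr_lt0.
pose K := 2 / e * (1 - expR (- e))^-1.
have K0 : 0 <= K by rewrite mulr_ge0 ?divr_ge0 ?invr_ge0 ?subr_ge0 ?ltW.
pose t n := e * (n + N.+1)%:R.
rewrite -nneseries_addn_ge; last by move=> n /a_n/f_ge0 f0; rewrite lee_fin mulr_ge0.
apply: le_lt_trans (@nneseries_le_integral _ _ _ lebesgue_measure `[a, +oo[%classic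
  (fun x => f x * ln x / x) (fun n => expR_shell (t n) e) _ K _ _ _ _ _ _ _ _ _) _.
- exact: measurable_itv.
- exact: measurable_tail_integrand.
- exact: tail_integrand_ge0.
- exact: K0.
- by move=> n; exact: measurable_expR_shell.
- apply: trivIset_expR_shell => i j ij.
  by apply: le_dist_mulr_natr; rewrite ?ltW // eqn_add2r.
- by move=> n; apply: expR_shell_sub_tail; apply: a_shell; rewrite leq_addl.
- by move=> n; rewrite lee_fin mulr_ge0 // f_ge0 // a_n // leq_addl.
- move=> n; have f0 : 0 <= f (expR (t n)) by rewrite f_ge0 // a_n // leq_addl.
  have term := tail_term_le_integral _ _ e0 (a_shell _ (leq_addl n N.+1)).
  have e20 : (0 <= (2 / e)%:E)%E by rewrite lee_fin divr_ge0 // ltW.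
  rewrite /K (EFinM (2 / e)) -muleA; apply: le_trans (lee_wpmul2l e20 term).
  rewrite -EFinM lee_fin /t.
  have -> : 2 / e * (f (expR (e * (n + N.+1)%:R)) * (e * (n + N.+1)%:R)) =
      ((n + N.+1)%:R + (n + N.+1)%:R) * f (expR (e * (n + N.+1)%:R)).
    by field; rewrite gt_eqF.
  by rewrite ler_wpM2r // -natr1 lerD2l ler1n addnS.
- by rewrite lte_mul_pinfty // lee_fin.
Qed.
End tail_series.

Section small_series.
Variables (R : realType) (g : R -> R) (b : R).
Hypothesis b_gt0 : 0 < b.
Hypothesis g_ge0 : forall x, 0 <= x <= b -> 0 <= g x.
Hypothesis g_nondec : forall x y, 0 <= x -> x <= y -> y <= b -> g x <= g y.

Lemma measurable_small_integrand :
  measurable_fun `[0, b]%classic (EFin \o (fun x => g x / x)).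
Proof.
apply/measurable_EFinP; apply: measurable_fun_divx => //.
exact: nondecreasing_itv_measurable (ltW b_gt0) g_nondec.
Qed.

Lemma small_integrand_ge0 x : `[0, b]%classic x -> 0 <= g x / x.
Proof.
by rewrite /= in_itv /= => /andP[x0 xb]; rewrite divr_ge0 // g_ge0 // x0 xb.
Qed.

Lemma expR_shell_sub_small t e :
  expR t <= b -> expR_shell t e `<=` `[0, b]%classic.
Proof.
move=> tb x; rewrite /expR_shell /= !in_itv /= => /andP[tx xt].
by rewrite (le_trans (ltW (expR_gt0 _)) tx) (le_trans (ltW xt) tb).
Qed.

Lemma small_term_le_integral e t : 0 < e -> expR t <= b ->
  ((g (expR (t - e)))%:E <= (1 - expR (- e))^-1%:E *
     \int[lebesgue_measure]_(x in expR_shell t e) (g x / x)%:E)%E.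
Proof.
move=> e0 tb.
have shell_b := expR_shell_sub_small _ e tb.
have y_b : 0 <= expR (t - e) <= b.
  by rewrite (ltW (expR_gt0 _)) (le_trans _ tb) // ler_expR gerBl ltW.
pose v := g (expR (t - e)) / expR t.
have v0 : 0 <= v by rewrite /v divr_ge0 ?g_ge0 // (ltW (expR_gt0 t)).
have v_le x : expR_shell t e x -> v <= g x / x.
  move=> xs; have /shell_b /= := xs; rewrite in_itv /= => /andP[_ xb].
  move: xs; rewrite /expR_shell /= in_itv /= => /andP[tx xt].
  have x0 : 0 < x := lt_le_trans (expR_gt0 _) tx.
  apply: (@le_trans _ _ (g x / expR t)).
    rewrite ler_wpM2r ?invr_ge0 ?(ltW (expR_gt0 t)) //.
    by apply: g_nondec => //; exact: ltW (expR_gt0 _).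
  by rewrite ler_wpM2l ?g_ge0 ?(ltW x0) ?xb // lef_pV2 ?posrE ?expR_gt0 // ltW.
have shell_int := @integral_expR_shell_ge _ _ t e v e0 v0
  (measurable_funS (measurable_itv _) shell_b measurable_small_integrand) v_le.
have q1 : expR (- e) < 1 by rewrite expR_lt1 oppr_lt0.
have K0 : (0 <= (1 - expR (- e))^-1%:E)%E by rewrite lee_fin invr_ge0 subr_ge0 ltW.
apply: le_trans (lee_wpmul2l K0 shell_int); rewrite -EFinM lee_fin.
have -> : (1 - expR (- e))^-1 * (v * (expR t * (1 - expR (- e)))) = g (expR (t - e)).
  by rewrite /v; field; rewrite gt_eqF ?expR_gt0 // subr_eq0 eq_sym lt_eqF.
by [].
Qed.

Lemma small_series_finite e N : 0 < e -> expR (- (e * N%:R)) <= b ->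
  (\int[lebesgue_measure]_(x in `[0%R, b]%classic) (g x / x)%:E < +oo)%E ->
  (\sum_(N.+1 <= n <oo) (g (expR (- (e * n%:R))))%:E < +oo)%E.
Proof.
move=> e0 N_b g_int.
have t_b n : (N.+1 <= n)%N -> expR (- (e * n%:R) + e) <= b.
  move=> Nn; apply: le_trans N_b; rewrite ler_expR.
  have : N%:R + 1 <= n%:R :> R by rewrite natr1 ler_nat.
  by nra.
have y_b n : (N.+1 <= n)%N -> 0 <= expR (- (e * n%:R)) <= b.
  move=> Nn; rewrite (ltW (expR_gt0 _)) (le_trans _ (t_b _ Nn)) //.
  by rewrite ler_expR lerDl ltW.
have q1 : expR (- e) < 1 by rewrite expR_lt1 oppr_lt0.
pose K := (1 - expR (- e))^-1.
have K0 : 0 <= K by rewrite invr_ge0 subr_ge0 ltW.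
pose t n := - (e * (n + N.+1)%:R) + e.
rewrite -nneseries_addn_ge; last by move=> n Nn; rewrite lee_fin g_ge0 // y_b.
apply: le_lt_trans (@nneseries_le_integral _ _ _ lebesgue_measure `[0, b]%classic
  (fun x => g x / x) (fun n => expR_shell (t n) e) _ K _ _ _ _ _ _ _ _ _) _.
- exact: measurable_itv.
- exact: measurable_small_integrand.
- exact: small_integrand_ge0.
- exact: K0.
- by move=> n; exact: measurable_expR_shell.
- apply: trivIset_expR_shell => i j ij.
  have -> : t i - t j = e * (j + N.+1)%:R - e * (i + N.+1)%:R by rewrite /t; ring.
  by apply: le_dist_mulr_natr; rewrite ?ltW // eqn_add2r eq_sym.
- by move=> n; apply: expR_shell_sub_small; apply: t_b; rewrite leq_addl.
- by move=> n; rewrite lee_fin g_ge0 // y_b // leq_addl.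
- move=> n; have := small_term_le_integral _ _ e0 (t_b _ (leq_addl n N.+1)).
  by rewrite /t addrK.
- by rewrite lte_mul_pinfty // lee_fin.
Qed.
End small_series.

Section ae_bounds.
Context {d} {T : measurableType d} {R : realType} (P : probability T R).

Lemma ae_eventually_max_le_expR (A : nat -> nat -> T -> R) N (a : R) (f : R -> R) e :
  (forall k n, measurable_fun setT (A k n)) -> 1 < a ->
  (forall x, a <= x -> 0 <= f x) ->
  (forall x y, a <= x -> x <= y -> f y * ln y <= f x * ln x) ->
  (\int[lebesgue_measure]_(x in `[a, +oo[%classic) (f x * ln x / x)%:E < +oo)%E ->
  (forall n k x, (N <= n)%N -> (k <= n)%N -> a <= x ->
     (1 - P [set w | (A k n w <= x)%R] <= (f x)%:E)%E) ->
  0 < e ->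
  {ae P, forall w, \forall n \near \oo,
     forall k, (k <= n)%N -> (A k n w <= expR (e * n%:R))%R}.
Proof.
move=> mA a_gt1 f_ge0 f_ln_noninc f_int tail e0.
have [M NM a_M] := exists_expR_mulr_natr_ge a e N e0.
pose B n k := [set w | expR (e * n%:R) < A k n w].
pose E n := \big[setU/set0]_(k < n.+1) B n k.
have mB n k : measurable (B n k).
  by rewrite /B gt_cst_setC; apply: measurableC; exact: measurable_le_cst.
have PE n : (M.+1 <= n)%N -> (P (E n) <= (n.+1%:R * f (expR (e * n%:R)))%:E)%E.
  move=> Mn; apply: measure_bigsetU_ord_le => // k kn.
  (* restate with [P] seen as a probability, for [probability_setC] *)
  suff : (P (B n k) <= (f (expR (e * n%:R)))%:E)%E by [].
  rewrite /B gt_cst_setC probability_setC; last exact: measurable_le_cst.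
  apply: tail; [exact: leq_trans NM (ltnW Mn) | by rewrite -ltnS |].
  by rewrite (le_trans a_M) // ler_expR ler_pM2l // ler_nat ltnW.
have mE n : measurable (E n) by apply: bigsetU_measurable => k _; exact: mB.
have := ae_eventually_notin P E _ M.+1 mE PE
  (@tail_series_finite _ _ _ a_gt1 f_ge0 f_ln_noninc _ _ e0 a_M f_int).
apply: filterS => w; apply: filterS => n nE k kn.
rewrite leNgt; apply/negP => lt_k; apply: nE.
by rewrite /E -bigcup_mkord; exists k => //=; rewrite ltnS.
Qed.

Lemma ae_eventually_gt_expRN (X : nat -> T -> R) N (b : R) (g : R -> R) e :
  (forall n, measurable_fun setT (X n)) -> 0 < b ->
  (forall x, 0 <= x <= b -> 0 <= g x) ->
  (forall x y, 0 <= x -> x <= y -> y <= b -> g x <= g y) ->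
  (\int[lebesgue_measure]_(x in `[0%R, b]%classic) (g x / x)%:E < +oo)%E ->
  (forall n x, (N <= n)%N -> 0 <= x <= b ->
     (P [set w | (X n w <= x)%R] <= (g x)%:E)%E) ->
  0 < e ->
  {ae P, forall w, \forall n \near \oo, (expR (- (e * n%:R)) < X n w)%R}.
Proof.
move=> mX b0 g_ge0 g_nondec g_int small e0.
have [M NM b_M] := exists_expR_mulr_natr_ge b^-1 e N e0.
have M_b : expR (- (e * M%:R)) <= b.
  by rewrite expRN -[b]invrK lef_pV2 ?posrE ?invr_gt0 ?expR_gt0.
pose E n := [set w | (X n w <= expR (- (e * n%:R)))%R].
have PE n : (M.+1 <= n)%N -> (P (E n) <= (g (expR (- (e * n%:R))))%:E)%E.
  move=> Mn; apply: small; first exact: leq_trans NM (ltnW Mn).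
  rewrite (ltW (expR_gt0 _)) (le_trans _ M_b) //.
  by rewrite ler_expR lerN2 ler_pM2l // ler_nat ltnW.
have := ae_eventually_notin P E _ M.+1 (fun n => measurable_le_cst _ _ (mX n)) PE
  (@small_series_finite _ _ _ b0 g_ge0 g_nondec _ _ e0 M_b g_int).
apply: filterS => w; apply: filterS => n nE.
by rewrite ltNge; apply/negP.
Qed.
End ae_bounds.

Section root_limits.
Variable R : realType.

Lemma powR_invn_le_expR (x e : R) n : (0 < n)%N -> 0 <= x ->
  x <= expR (e * n%:R) -> x `^ n%:R^-1 <= expR e.
Proof.
move=> n0 x0 xe; rewrite /powR; case: ifP => [_|xn0].
  by rewrite invr_eq0 pnatr_eq0 gtn_eqF // ltW // expR_gt0.
have xp : 0 < x by rewrite lt_neqAle eq_sym xn0.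
rewrite ler_expR mulrC ler_pdivrMr ?ltr0n //.
by rewrite -ler_expR lnK // posrE.
Qed.

Lemma expRN_le_powR_invn (x e : R) n : (0 < n)%N ->
  expR (- (e * n%:R)) < x -> expR (- e) <= x `^ n%:R^-1.
Proof.
move=> n0 xe; have xp : 0 < x := lt_trans (expR_gt0 _) xe.
rewrite /powR gt_eqF // ler_expR mulrC ler_pdivlMr ?ltr0n //.
by rewrite -ler_expR lnK ?posrE // mulNr ltW.
Qed.

Lemma cvg_expR_harmonic_squeeze (u : R^nat) :
  (forall m, \forall n \near \oo, expR (- harmonic m) <= u n <= expR (harmonic m)) ->
  u @ \oo --> (1 : R).
Proof.
move=> u_bnd; apply/cvgrPdist_lt => del del0.
have expR_h s : (fun m => expR (s * harmonic m)) @ \oo --> (1 : R).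
  rewrite -expR0 -(mulr0 s).
  apply: (cvg_comp (fun m => s * harmonic m) expR _ (@continuous_expR R (s * 0))).
  by apply: cvgMr; exact: cvg_harmonic.
near \oo => m.
apply: filterS (u_bnd m) => n /andP[lo hi]; rewrite ltr_distlC; apply/andP; split.
- apply: lt_le_trans lo; near: m.
  move/cvgrPdist_lt/(_ del del0): (expR_h (-1)); apply: filterS => m.
  by rewrite mulN1r ltr_distlC => /andP[].
- apply: le_lt_trans hi _; near: m.
  move/cvgrPdist_lt/(_ del del0): (expR_h 1); apply: filterS => m.
  by rewrite mul1r ltr_distlC => /andP[].
Unshelve. all: end_near.
Qed.

Lemma cvg_powR_invn_1 (x : R^nat) : (forall n, 0 <= x n) ->
  (forall m, \forall n \near \oo,
     expR (- (harmonic m * n%:R)) < x n <= expR (harmonic m * n%:R)) ->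
  (fun n => x n `^ n%:R^-1) @ \oo --> (1 : R).
Proof.
move=> x0 x_bnd; apply: cvg_expR_harmonic_squeeze => m.
apply: filterS2 (x_bnd m) (nbhs_infty_gt 0) => n /andP[lo hi] n0.
by rewrite expRN_le_powR_invn // powR_invn_le_expR.
Qed.

Lemma root_limits (A : nat -> nat -> R) :
  (forall k n, 0 <= A k n) ->
  (forall m, \forall n \near \oo,
     forall k, (k <= n)%N -> A k n <= expR (harmonic m * n%:R)) ->
  (forall m k, \forall n \near \oo, expR (- (harmonic m * n%:R)) < A k n) ->
  (forall m, \forall n \near \oo, expR (- (harmonic m * n%:R)) < A n n) ->
  [/\ (fun n : nat => A n n `^ (n%:R^-1)) @ \oo --> (1 : R),
      forall k : nat, (fun n : nat => A k n `^ (n%:R^-1)) @ \oo --> (1 : R)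
    & (fun n : nat => \big[Num.max/0]_(k < n.+1) A k n `^ (n%:R^-1)) @ \oo --> (1 : R)].
Proof.
move=> A0 up lo lo_diag; split.
- apply: cvg_powR_invn_1 => // m.
  by apply: filterS2 (up m) (lo_diag m) => n up_n ->; exact: up_n.
- move=> k; apply: cvg_powR_invn_1 => // m.
  by apply: filterS3 (up m) (lo m k) (nbhs_infty_ge k) => n up_n -> /up_n.
- apply: cvg_expR_harmonic_squeeze => m.
  apply: filterS3 (up m) (lo_diag m) (nbhs_infty_gt 0) => n up_n lo_n n0.
  apply/andP; split.
    apply: le_trans (le_bigmax _ (fun k : 'I_n.+1 => A k n `^ n%:R^-1) ord_max).
    exact: expRN_le_powR_invn.
  apply: bigmax_le => [|k _]; first exact: ltW (expR_gt0 _).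
  by apply: powR_invn_le_expR => //; apply: up_n; rewrite -ltnS.
Qed.
End root_limits.

Theorem lemma4p3 (R : realType) (d : measure_display) (T : measurableType d)
  (P : probability T R) (ReA ImA : nat -> nat -> {RV P >-> R})
  (N1 : nat)
  (Hind : forall n, (N1 <= n)%N ->
     mutually_independent P
       (fun k : 'I_n.+1 => fun w => cmod (ReA k n w) (ImA k n w)))
  (a : R) (f : R -> R)
  (Ha : 1 < a)
  (Hf01 : forall x, a <= x -> 0 <= f x <= 1)
  (Hfdec : forall x y, a <= x -> x <= y -> f y * ln y <= f x * ln x)
  (Hfint : (\int[lebesgue_measure]_(x in `[a, +oo[%classic)
              (f x * ln x / x)%:E < +oo)%E)
  (Htail : forall n k x, (N1 <= n)%N -> (k <= n)%N -> a <= x ->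
     (1 - P [set w | (cmod (ReA k n w) (ImA k n w) <= x)%R] <= (f x)%:E)%E)
  (N2 : nat) (b : R) (g : R -> R)
  (Hb : 0 < b < 1)
  (Hg01 : forall x : R, 0 <= x <= b -> 0 <= g x <= 1)
  (Hginc : forall x y : R, 0 <= x -> x <= y -> y <= b -> g x <= g y)
  (Hgint : (\int[lebesgue_measure]_(x in `[0%R, b]%classic)
              (g x / x)%:E < +oo)%E)
  (Hsmall : forall n k (x : R), (N2 <= n)%N -> (k <= n)%N -> 0 <= x <= b ->
     (P [set w | (cmod (ReA k n w) (ImA k n w) <= x)%R] <= (g x)%:E)%E) :
  {ae P, forall w,
     [/\ (fun n : nat => cmod (ReA n n w) (ImA n n w) `^ (n%:R^-1)) @ \oo --> (1 : R),
         forall k : nat,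
           (fun n : nat => cmod (ReA k n w) (ImA k n w) `^ (n%:R^-1)) @ \oo --> (1 : R)
       & (fun n : nat => \big[Num.max/0]_(k < n.+1)
              cmod (ReA k n w) (ImA k n w) `^ (n%:R^-1)) @ \oo --> (1 : R)]}.
Proof.
pose A k n w := cmod (ReA k n w) (ImA k n w).
have mA k n : measurable_fun setT (A k n).
  by apply: measurable_fun_cmod; exact: measurable_funPT.
have f_ge0 x (ax : a <= x) : 0 <= f x by case/andP: (Hf01 x ax).
have g_ge0 x (xb : 0 <= x <= b) : 0 <= g x by case/andP: (Hg01 x xb).
have b0 : 0 < b by case/andP: Hb.
have upper : {ae P, forall w m, \forall n \near \oo,
    forall k, (k <= n)%N -> (A k n w <= expR (harmonic m * n%:R))%R}.
  apply: ae_foralln => m.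
  exact: (@ae_eventually_max_le_expR _ _ _ P A N1 a f _ mA Ha f_ge0 Hfdec Hfint Htail
    (harmonic_gt0 m)).
have lower : {ae P, forall w m k, \forall n \near \oo,
    (expR (- (harmonic m * n%:R)) < A k n w)%R}.
  apply: ae_foralln => m; apply: ae_foralln => k.
  apply: (@ae_eventually_gt_expRN _ _ _ P (A k) (maxn N2 k) b g _ (mA k) b0 g_ge0 Hginc
    Hgint _ (harmonic_gt0 m)).
  by move=> n x; rewrite geq_max => /andP[N2n kn]; exact: Hsmall.
have lower_diag : {ae P, forall w m, \forall n \near \oo,
    (expR (- (harmonic m * n%:R)) < A n n w)%R}.
  apply: ae_foralln => m.
  apply: (@ae_eventually_gt_expRN _ _ _ P (fun n => A n n) N2 b g _ (fun n => mA n n) b0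
    g_ge0 Hginc Hgint _ (harmonic_gt0 m)).
  by move=> n x N2n; exact: Hsmall.
apply: filterS3 upper lower lower_diag => w up lo lo_diag.
exact: root_limits (fun k n => A k n w) (fun k n => sqrtr_ge0 _) up lo lo_diag.
Qed.
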